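(* Let $h$ be a bilinear form on $V$. For every double vector $\omega\in\mathcal D(V)$, $$\widehat h_R(\omega)=e^h\circ\omega\quad\text{and}\quad\widehat h_L(\omega)=\omega\circ e^{(h^t)},$$ where $e^h=\sum_{p\geq0}\frac{h^p}{p!}$.
   Context: $(V,g)$ is a Euclidean real vector space of dimension $n$, identified with $V^*$ via $g$, so double forms and double vectors $\mathcal D(V)=\bigoplus_{p,q}\Lambda^pV\otimes\Lambda^qV$ are identified; $\Lambda V$ carries the inner product induced by $g$. Exterior product: $(\theta_1\otimes\theta_2)(\theta_3\otimes\theta_4)=(\theta_1\wedge\theta_3)\otimes(\theta_2\wedge\theta_4)$; powers $h^p$ are for this product, $h^0=1$, and $h$ is regarded as a $(1,1)$ double vector. Composition product: $(\theta_1\otimes\theta_2)\circ(\theta_3\otimes\theta_4)=\langle\theta_1,\theta_4\rangle\theta_3\otimes\theta_2$ ($0$ if $\theta_1,\theta_4$ have different degrees), extended bilinearly. Transpose: $h^t(x,y)=h(y,x)$. $\bar h$ is the endomorphism of $V$ with $\langle\bar h(v),w\rangle=h(v,w)$, $\widehat h$ the exterior algebra endomorphism of $\Lambda V$ with $\widehat h(1)=1$, $\widehat h(v_1\wedge\cdots\wedge v_p)=\bar h(v_1)\wedge\cdots\wedge\bar h(v_p)$, and $\widehat h_R(\theta_1\otimes\theta_2)=\theta_1\otimes\widehat h(\theta_2)$, $\widehat h_L(\theta_1\otimes\theta_2)=\widehat h(\theta_1)\otimes\theta_2$, extended linearly. *)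

From mathcomp Require Import all_boot all_order all_algebra.
Set Implicit Arguments.
Unset Strict Implicit.
Unset Printing Implicit Defensive.
Import Order.TTheory GRing.Theory Num.Theory.
Local Open Scope ring_scope.

(* Model: V = 'rV[R]_n with the standard (Euclidean) inner product and the
   orthonormal basis delta_mx 0 i.  The exterior algebra Lambda V is modelled
   by its coordinates in the orthonormal basis e_I = e_{i1} /\ ... /\ e_{ik}
   (I = {i1 < ... < ik} a subset of 'I_n); double vectors D(V) by their
   coordinates in the basis e_I (x) e_J of Lambda V (x) Lambda V. *)

Section DoubleForms.
Variables (R : realFieldType) (n : nat).

Definition vecV := 'rV[R]_n.
Definition ext := {ffun {set 'I_n} -> R}.
Definition dvec := {ffun {set 'I_n} * {set 'I_n} -> R}.

Definition evec (i : 'I_n) : vecV := delta_mx 0 i.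
Definition gV (u v : vecV) : R := \sum_(i < n) u 0 i * v 0 i.

Definition ebas (I : {set 'I_n}) : ext := [ffun K => (K == I)%:R].
Definition ext_one : ext := ebas set0.
Definition ext_of_vec (v : vecV) : ext :=
  [ffun K => \sum_(i < n) (K == [set i])%:R * v 0 i].

(* inner product on Lambda V induced by g (e_I orthonormal) *)
Definition ext_dot (a b : ext) : R := \sum_(I : {set 'I_n}) a I * b I.

(* sign of e_I /\ e_J = sgn e_{I u J} for disjoint I, J *)
Definition wsign (I J : {set 'I_n}) : R :=
  (-1) ^+ #|[set p : 'I_n * 'I_n | [&& p.1 \in I, p.2 \in J & (p.2 < p.1)%N]]|.

Definition wedge (a b : ext) : ext :=
  [ffun K => \sum_(I : {set 'I_n}) \sum_(J : {set 'I_n} |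
      (I :&: J == set0) && (I :|: J == K)) wsign I J * a I * b J].

Definition wedge_list (s : seq ext) : ext := foldr wedge ext_one s.

Definition tens (a b : ext) : dvec := [ffun p => a p.1 * b p.2].

(* exterior product of double vectors, extended bilinearly from
   (t1 (x) t2)(t3 (x) t4) = (t1 /\ t3) (x) (t2 /\ t4) *)
Definition dmul (w1 w2 : dvec) : dvec :=
  [ffun p => \sum_(I : {set 'I_n}) \sum_(J : {set 'I_n})
     \sum_(K : {set 'I_n}) \sum_(L : {set 'I_n})
       w1 (I, J) * w2 (K, L) *
       tens (wedge (ebas I) (ebas K)) (wedge (ebas J) (ebas L)) p].

Definition done : dvec := tens ext_one ext_one.
Definition dpow (w : dvec) (k : nat) : dvec := iter k (dmul w) done.

(* composition product, extended bilinearly from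
   (t1 (x) t2) o (t3 (x) t4) = <t1, t4> t3 (x) t2 *)
Definition dcomp (w1 w2 : dvec) : dvec :=
  [ffun p => \sum_(I : {set 'I_n}) \sum_(J : {set 'I_n})
     \sum_(K : {set 'I_n}) \sum_(L : {set 'I_n})
       w1 (I, J) * w2 (K, L) *
       (ext_dot (ebas I) (ebas L) * tens (ebas K) (ebas J) p)].

(* e^w = sum_{p >= 0} w^p / p!  (the terms with p > n vanish) *)
Definition dexp (w : dvec) : dvec :=
  [ffun p => \sum_(k < n.+1) (k`!%:R)^-1 * dpow w k p].

Definition form_dvec (h : vecV -> vecV -> R) : dvec :=
  [ffun p => \sum_(i < n) \sum_(j < n)
     h (evec i) (evec j) * tens (ext_of_vec (evec i)) (ext_of_vec (evec j)) p].

Definition form_tr (h : vecV -> vecV -> R) : vecV -> vecV -> R :=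
  fun x y => h y x.

(* hbar : <hbar v, w> = h(v, w) *)
Definition hbar (h : vecV -> vecV -> R) (v : vecV) : vecV :=
  \row_j h v (evec j).

(* hhat : exterior algebra endomorphism, hhat 1 = 1,
   hhat (v1 /\ ... /\ vp) = hbar v1 /\ ... /\ hbar vp, extended linearly *)
Definition hhat (h : vecV -> vecV -> R) (a : ext) : ext :=
  [ffun K => \sum_(I : {set 'I_n}) a I *
     wedge_list [seq ext_of_vec (hbar h (evec i)) | i <- enum I] K].

Definition hhatR (h : vecV -> vecV -> R) (w : dvec) : dvec :=
  [ffun p => \sum_(I : {set 'I_n}) \sum_(J : {set 'I_n})
     w (I, J) * tens (ebas I) (hhat h (ebas J)) p].

Definition hhatL (h : vecV -> vecV -> R) (w : dvec) : dvec :=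
  [ffun p => \sum_(I : {set 'I_n}) \sum_(J : {set 'I_n})
     w (I, J) * tens (hhat h (ebas I)) (ebas J) p].

End DoubleForms.

(* The e_Q-coordinate of
   hhat (e_L) is the minor of the matrix (h (e_i, e_j)) with rows L and
   columns Q: expanding the wedge product hbar e_l1 /\ ... /\ hbar e_lk
   along its first factor is the Laplace expansion of that minor.  The same
   expansion shows that the (P, Q)-coordinate of h^k is k! times this minor
   when |P| = k and 0 otherwise, so e^h is the matrix of all minors of h.
   Composing with e^h (resp. e^(h^t)) then contracts the second (resp. first)
   index of omega against this matrix, which is hhat_R (resp. hhat_L). *)

From mathcomp Require Import all_boot all_order all_algebra.
From mathcomp Require Import ring.
Import GRing.Theory Num.Theory.
Local Open Scope ring_scope.
Set Implicit Arguments.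
Unset Strict Implicit.

Section OrdinalSets.
Variable n : nat.
Implicit Types (P : {set 'I_n}) (s : seq 'I_n).

Definition ord_lt (x y : 'I_n) := (x < y)%N.

Lemma ord_lt_trans : transitive ord_lt.
Proof. by move=> y x z; apply: ltn_trans. Qed.

Lemma sorted_enum_set P : sorted ord_lt (enum P).
Proof.
rewrite /enum_mem; apply: sorted_filter; first exact: ord_lt_trans.
by rewrite -enumT; have := iota_ltn_sorted 0 n; rewrite -val_enum_ord sorted_map.
Qed.

Lemma sorted_index_count s i : sorted ord_lt s -> i \in s ->
  index i s = count (fun p : 'I_n => (p < i)%N) s.
Proof.
elim: s => [//|x s IHs] /= s_sorted; rewrite inE.
have x_min : all (ord_lt x) s by apply: order_path_min s_sorted; apply: ord_lt_trans.
have [-> _|_ /= i_s] := eqVneq i x.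
  rewrite ltnn add0n; apply/esym/eqP; rewrite -leqn0 leqNgt -has_count.
  by apply/hasPn => y /(allP x_min); rewrite /ord_lt -leqNgt => /ltnW.
have x_lt_i : (x < i)%N := allP x_min i i_s.
rewrite x_lt_i add1n IHs //.
exact: path_sorted s_sorted.
Qed.

Definition set_rank P (i : 'I_n) := #|[set p in P | (p < i)%N]|.

Lemma set_rankE P i : i \in P -> set_rank P i = index i (enum P).
Proof.
move=> iP; rewrite (sorted_index_count (sorted_enum_set P)) ?mem_enum //.
rewrite /set_rank -sum1_card -sum1_count big_enum_cond.
by apply: eq_bigl => p; rewrite !inE.
Qed.

Lemma enum_setD1 P i : enum (P :\ i) = rem i (enum P).
Proof.
rewrite rem_filter ?enum_uniq // /enum_mem -filter_predI.
by apply: eq_filter => x; rewrite /= !inE andbC.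
Qed.

Lemma enum_set_cons P x s : enum P = x :: s ->
  [/\ x \in P, enum (P :\ x) = s & set_rank P x = 0%N].
Proof.
move=> eP; have xP : x \in P by rewrite -mem_enum eP mem_head.
by rewrite set_rankE // enum_setD1 eP /= eqxx.
Qed.

End OrdinalSets.

Section KroneckerSums.
Variables (R : pzSemiRingType) (T : finType).

Lemma sum_mul_delta (F : T -> R) (a : T) : \sum_x F x * (x == a)%:R = F a.
Proof.
rewrite (bigD1 a) //= eqxx mulr1 big1 ?addr0 // => x /negbTE ->.
by rewrite mulr0.
Qed.

Lemma sum_delta_mul (F : T -> R) (a : T) : \sum_x (x == a)%:R * F x = F a.
Proof.
rewrite (bigD1 a) //= eqxx mul1r big1 ?addr0 // => x /negbTE ->.
by rewrite mul0r.
Qed.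

End KroneckerSums.

Definition rank_sign (R : pzRingType) n (P : {set 'I_n}) i : R :=
  (-1) ^+ set_rank P i.

Section WedgeOnBasis.
Variables (R : realFieldType) (n : nat).
Implicit Types (P I K : {set 'I_n}).

Definition splits I K P := (I :&: K == set0) && (I :|: K == P).

Lemma wedge_ebas I K P :
  wedge (ebas R I) (ebas R K) P = (splits I K P)%:R * wsign R I K.
Proof.
rewrite ffunE (bigD1 I) //= [X in _ + X]big1 ?addr0; last first.
  move=> I' /negbTE I'I; apply: big1 => J _.
  by rewrite ffunE I'I mulr0 mul0r.
rewrite big_mkcond (bigD1 K) //= [X in _ + X]big1 ?addr0; last first.
  by move=> J /negbTE JK; case: ifP => // _; rewrite [ebas _ K J]ffunE JK mulr0.
by rewrite !ffunE !eqxx /splits; case: ifP; rewrite ?mulr1 ?mul1r ?mul0r.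
Qed.

Lemma splits_set1 i K P : splits [set i] K P = (i \in P) && (K == P :\ i).
Proof.
apply/andP/andP => [[/eqP iK /eqP <-]|[iP /eqP ->]].
  have iNK : i \notin K.
    by apply/negP => iK'; move/setP/(_ i): iK; rewrite !inE eqxx iK'.
  by rewrite !inE eqxx setU1K.
split; last by rewrite setD1K.
by apply/eqP/setP => x; rewrite !inE; case: eqP.
Qed.

Lemma wsign_set1 P i : i \in P -> wsign R [set i] (P :\ i) = rank_sign R P i.
Proof.
move=> iP; congr (_ ^+ _).
have -> : [set p : 'I_n * 'I_n | [&& p.1 \in [set i], p.2 \in P :\ i & (p.2 < p.1)%N]]
   = (pair i) @: [set p in P | (p < i)%N].
  apply/setP => [[a b]]; rewrite !inE /=.
  apply/idP/imsetP => [/and3P [/eqP -> /andP [_ bP] b_lt]|[q]].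
    by exists b => //; rewrite inE bP.
  rewrite inE => /andP [qP q_lt] [-> ->].
  by rewrite eqxx qP q_lt neq_ltn q_lt.
by rewrite card_imset // => x y [].
Qed.

Lemma sum_wedge_set1 (F : {set 'I_n} -> R) i P :
  \sum_K F K * ((splits [set i] K P)%:R * wsign R [set i] K)
   = if i \in P then rank_sign R P i * F (P :\ i) else 0.
Proof.
under eq_bigr => K _ do rewrite splits_set1.
case: ifP => iP; last by apply: big1 => K _; rewrite mul0r mulr0.
rewrite (bigD1 (P :\ i)) //= eqxx [X in _ + X]big1 ?addr0.
  by rewrite mul1r wsign_set1 // mulrC.
by move=> K /negbTE ->; rewrite mul0r mulr0.
Qed.

End WedgeOnBasis.

Section DegreeOneProducts.
Variables (R : realFieldType) (n : nat).
Implicit Types (P Q I J K L : {set 'I_n}).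

Lemma sum_on_singletons (c : 'I_n -> R) (G : {set 'I_n} -> R) :
  \sum_I (\sum_i (I == [set i])%:R * c i) * G I = \sum_i c i * G [set i].
Proof.
under eq_bigr => I _ do rewrite mulr_suml.
rewrite exchange_big; apply: eq_bigr => i _.
by under eq_bigr => I _ do rewrite -mulrA; rewrite sum_delta_mul.
Qed.

Lemma sum_on_singletons2 (c : 'I_n -> 'I_n -> R) (G : {set 'I_n} -> {set 'I_n} -> R) :
  \sum_I \sum_J (\sum_i \sum_j c i j * ((I == [set i])%:R * (J == [set j])%:R)) * G I J
  = \sum_i \sum_j c i j * G [set i] [set j].
Proof.
have split_delta I J : \sum_i \sum_j c i j * ((I == [set i])%:R * (J == [set j])%:R)
    = \sum_i (I == [set i])%:R * (\sum_j (J == [set j])%:R * c i j).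
  apply: eq_bigr => i _; rewrite mulr_sumr; apply: eq_bigr => j _; ring.
under eq_bigr => I _ do under eq_bigr => J _ do rewrite split_delta.
rewrite exchange_big; under eq_bigr => J _ do rewrite sum_on_singletons.
by rewrite exchange_big; apply: eq_bigr => i _; rewrite sum_on_singletons.
Qed.

Lemma ext_of_evec i K : ext_of_vec (evec R i) K = (K == [set i])%:R.
Proof.
rewrite ffunE; under eq_bigr => j _ do rewrite mxE eqxx /=.
exact: sum_mul_delta.
Qed.

Lemma form_dvecE (h : vecV R n -> vecV R n -> R) I J :
  form_dvec h (I, J) = \sum_i \sum_j h (evec R i) (evec R j) *
     ((I == [set i])%:R * (J == [set j])%:R).
Proof.
rewrite ffunE; apply: eq_bigr => i _; apply: eq_bigr => j _.
by rewrite ffunE /= !ext_of_evec.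
Qed.

Lemma wedge_vecE (u : vecV R n) (W : ext R n) P :
  wedge (ext_of_vec u) W P = \sum_(i in P) u 0 i * rank_sign R P i * W (P :\ i).
Proof.
have wedge_coord I : \sum_(J | (I :&: J == set0) && (I :|: J == P))
     wsign R I J * ext_of_vec u I * W J
   = ext_of_vec u I * \sum_J W J * ((splits I J P)%:R * wsign R I J).
  rewrite big_mkcond mulr_sumr; apply: eq_bigr => J _ /=.
  by rewrite /splits; case: ifP => _; rewrite ?mul1r ?mul0r ?mulr0 //; ring.
rewrite ffunE; under eq_bigr => I _ do rewrite wedge_coord ffunE.
rewrite sum_on_singletons [RHS]big_mkcond; apply: eq_bigr => i _ /=.
by rewrite sum_wedge_set1; case: ifP => _; rewrite ?mulrA ?mulr0.
Qed.

Lemma dmul_formE (h : vecV R n -> vecV R n -> R) (W : dvec R n) P Q :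
  dmul (form_dvec h) W (P, Q) = \sum_(i in P) \sum_(j in Q)
     h (evec R i) (evec R j) * (rank_sign R P i * rank_sign R Q j) * W (P :\ i, Q :\ j).
Proof.
have dmul_coord I J : \sum_K \sum_L form_dvec h (I, J) * W (K, L) *
     tens (wedge (ebas R I) (ebas R K)) (wedge (ebas R J) (ebas R L)) (P, Q)
   = form_dvec h (I, J) * \sum_K ((splits I K P)%:R * wsign R I K) *
       \sum_L W (K, L) * ((splits J L Q)%:R * wsign R J L).
  rewrite mulr_sumr; apply: eq_bigr => K _; rewrite !mulr_sumr; apply: eq_bigr => L _.
  by rewrite [tens _ _ _]ffunE /= !wedge_ebas; ring.
rewrite ffunE; under eq_bigr => I _ do under eq_bigr => J _ do
  rewrite dmul_coord form_dvecE.
rewrite sum_on_singletons2 [RHS]big_mkcond; apply: eq_bigr => i _ /=.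
under eq_bigr => j _ do under eq_bigr => K _ do rewrite sum_wedge_set1 mulrC.
under eq_bigr => j _ do rewrite sum_wedge_set1.
case: ifP => iP; last by apply: big1 => j _; rewrite mulr0.
rewrite [RHS]big_mkcond; apply: eq_bigr => j _ /=.
by case: ifP => _; rewrite ?mulr0 //; ring.
Qed.

End DegreeOneProducts.

Section Minors.
Variables (R : comPzRingType) (n : nat) (a : 'I_n -> 'I_n -> R).
Implicit Types (P Q : {set 'I_n}).

(* [a] extended by 0 to indices in nat, so that minors can be indexed by
   sequences of naturals: 'I_n has no default element when n = 0. *)
Definition anat (x y : nat) : R :=
  if insub x is Some i then if insub y is Some j then a i j else 0 else 0.

Definition seq_minor k (s t : seq nat) : 'M[R]_k :=
  \matrix_(x, y) anat (nth 0%N s x) (nth 0%N t y).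

Definition set_seq P : seq nat := map val (enum P).

Definition minor P Q : R :=
  if #|P| == #|Q| then \det (seq_minor #|P| (set_seq P) (set_seq Q)) else 0.

Definition rem_at (k : nat) (s : seq nat) := take k s ++ drop k.+1 s.

Lemma nth_rem_at s k x : (k <= size s)%N ->
  nth 0%N (rem_at k s) x = nth 0%N s (bump k x).
Proof.
move=> k_le; rewrite /rem_at nth_cat size_takel // /bump.
case: ltnP => [x_lt|k_le_x]; first by rewrite nth_take // leqNgt x_lt.
by rewrite nth_drop add1n addSn subnKC.
Qed.

Lemma seq_minor_cofactor k s t (x y : 'I_k.+1) :
    (x <= size s)%N -> (y <= size t)%N ->
  row' x (col' y (seq_minor k.+1 s t)) = seq_minor k (rem_at x s) (rem_at y t).
Proof. by move=> xs yt; apply/matrixP => u v; rewrite !mxE /= !nth_rem_at. Qed.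

Lemma set_seq_setD1 P i : set_seq (P :\ i) = rem_at (index i (enum P)) (set_seq P).
Proof. by rewrite /set_seq enum_setD1 remE map_cat map_take map_drop. Qed.

Lemma anat_val (i j : 'I_n) : anat i j = a i j.
Proof. by rewrite /anat !valK. Qed.

Lemma nth_set_seq P (x0 : 'I_n) k : (k < #|P|)%N ->
  nth 0%N (set_seq P) k = val (nth x0 (enum P) k).
Proof. by move=> k_lt; rewrite /set_seq (nth_map x0) // -cardE. Qed.

Lemma sum_set_nth Q (x0 : 'I_n) (F : 'I_n -> R) :
  \sum_(j in Q) F j = \sum_(k < #|Q|) F (nth x0 (enum Q) k).
Proof. by rewrite big_enum_val; apply: eq_bigr => k _; rewrite (enum_val_nth x0). Qed.

Lemma minor_set0 Q : minor set0 Q = (Q == set0)%:R.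
Proof. by rewrite /minor cards0 eq_sym cards_eq0; case: ifP => _ //; rewrite det_mx00. Qed.

Lemma minor_expand P Q i : i \in P ->
  minor P Q = \sum_(j in Q)
    rank_sign R P i * rank_sign R Q j * a i j * minor (P :\ i) (Q :\ j).
Proof.
move=> iP; have cardP := cardsD1 i P; rewrite iP add1n in cardP.
rewrite /minor; have [PQ|PQ] := eqVneq #|P| #|Q|; last first.
  apply/esym/big1 => j jQ; have cardQ := cardsD1 j Q; rewrite jQ add1n in cardQ.
  by rewrite ifF ?mulr0 //; apply/negbTE; move: PQ; rewrite cardP cardQ eqSS.
move: (PQ); rewrite cardP => cardQ; set k := #|P :\ i|.
have i_idx : (index i (enum P) < k.+1)%N by rewrite -cardP cardE index_mem mem_enum.
rewrite (expand_det_row _ (Ordinal i_idx)) (sum_set_nth Q i) -cardQ.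
apply: eq_bigr => y _; set j := nth i (enum Q) y.
have y_lt : (y < size (enum Q))%N by rewrite -cardE -cardQ.
have jQ : j \in Q by rewrite -mem_enum mem_nth.
have cardQj := cardsD1 j Q; rewrite jQ add1n in cardQj.
have idx_j : index j (enum Q) = y by rewrite index_uniq ?enum_uniq.
rewrite ifT; last by apply/eqP/succn_inj; rewrite cardQ cardQj.
rewrite mxE (nth_set_seq i) ?cardP // (nth_set_seq i) -?cardQ //.
rewrite nth_index ?mem_enum // -/j anat_val /cofactor seq_minor_cofactor; first last.
- by rewrite size_map -cardE -cardQ ltnW.
- by rewrite size_map -cardE cardP ltnW.
rewrite !set_seq_setD1 idx_j /rank_sign !set_rankE // idx_j exprD /=.
ring.
Qed.

End Minors.

Lemma minor_tr (R : comPzRingType) n (a : 'I_n -> 'I_n -> R) P Q :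
  minor (fun i j => a j i) P Q = minor a Q P.
Proof.
rewrite /minor eq_sym; have [PQ|//] := eqVneq #|Q| #|P|.
rewrite PQ -det_tr; congr (\det _); apply/matrixP => x y; rewrite !mxE /anat.
by case: insub => [i|]; case: insub.
Qed.

Section ExponentialOfForm.
Variables (R : realFieldType) (n : nat) (h : vecV R n -> vecV R n -> R).
Implicit Types (P Q I J L : {set 'I_n}).

Definition hcoef (i j : 'I_n) := h (evec R i) (evec R j).

Lemma wedge_list_hbar m L : #|L| = m -> forall Q,
  wedge_list [seq ext_of_vec (hbar h (evec R i)) | i <- enum L] Q = minor hcoef L Q.
Proof.
elim: m L => [|m IHm] L cardL Q.
  move/eqP: cardL; rewrite cards_eq0 => /eqP ->.
  by rewrite enum_set0 minor_set0 ffunE.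
case eL: (enum L) => [|x s]; first by move: cardL; rewrite cardE eL.
have [xL <- rank_x] := enum_set_cons eL.
have cardLx := cardsD1 x L; rewrite xL add1n cardL in cardLx; case: cardLx => cardLx.
rewrite /= wedge_vecE (minor_expand _ _ xL); apply: eq_bigr => j _.
by rewrite IHm // mxE /rank_sign rank_x expr0 /hcoef; ring.
Qed.

Lemma hhat_ebas L Q : hhat h (ebas R L) Q = minor hcoef L Q.
Proof.
rewrite ffunE; under eq_bigr => I _ do rewrite ffunE mulrC.
by rewrite sum_mul_delta (wedge_list_hbar (erefl _)).
Qed.

Lemma dpow_form k P Q :
  dpow (form_dvec h) k (P, Q) = (#|P| == k)%:R * k`!%:R * minor hcoef P Q.
Proof.
elim: k P Q => [|k IHk] P Q.
  rewrite /dpow /= ffunE /= !ffunE cards_eq0.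
  have [->|_] := eqVneq P set0; last by rewrite !mul0r.
  by rewrite minor_set0 !mul1r.
rewrite [dpow _ _]iterS dmul_formE.
have expand_row i : i \in P -> \sum_(j in Q) h (evec R i) (evec R j) *
    (rank_sign R P i * rank_sign R Q j) * dpow (form_dvec h) k (P :\ i, Q :\ j)
   = (#|P| == k.+1)%:R * k`!%:R * minor hcoef P Q.
  move=> iP; rewrite (minor_expand _ _ iP) !mulr_sumr; apply: eq_bigr => j _.
  have cardP := cardsD1 i P; rewrite iP add1n in cardP.
  by rewrite IHk cardP eqSS /hcoef; ring.
rewrite (eq_bigr _ expand_row) sumr_const.
have [->|_] := eqVneq #|P| k.+1; last by rewrite !mul0r mul0rn.
by rewrite factS natrM -mulr_natr; ring.
Qed.

Lemma dexp_form P Q : dexp (form_dvec h) (P, Q) = minor hcoef P Q.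
Proof.
have cardP : (#|P| < n.+1)%N by rewrite ltnS -[n in (_ <= n)%N]card_ord max_card.
rewrite ffunE (bigD1 (Ordinal cardP)) //= [X in _ + X]big1 ?addr0 => [|k kP].
  by rewrite dpow_form eqxx mul1r mulrA mulVf ?mul1r // pnatr_eq0 -lt0n fact_gt0.
rewrite dpow_form; have /negbTE -> : #|P| != k.
  by apply: contra kP => /eqP cardPk; apply/eqP/val_inj.
by rewrite !mul0r mulr0.
Qed.

Lemma hhatRE (w : dvec R n) P Q :
  hhatR h w (P, Q) = \sum_J w (P, J) * minor hcoef J Q.
Proof.
rewrite ffunE (bigD1 P) //= [X in _ + X]big1 ?addr0 => [|I IP].
  by apply: eq_bigr => J _; rewrite ffunE /= hhat_ebas ffunE eqxx mul1r.
apply: big1 => J _.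
by rewrite ffunE /= [ebas _ I P]ffunE eq_sym (negbTE IP) mul0r mulr0.
Qed.

Lemma hhatLE (w : dvec R n) P Q :
  hhatL h w (P, Q) = \sum_I w (I, Q) * minor hcoef I P.
Proof.
rewrite ffunE; apply: eq_bigr => I _.
rewrite (bigD1 Q) //= [X in _ + X]big1 ?addr0 => [|J JQ].
  by rewrite ffunE /= hhat_ebas ffunE eqxx mulr1.
by rewrite ffunE /= [ebas _ J Q]ffunE [Q == J]eq_sym (negbTE JQ) !mulr0.
Qed.

End ExponentialOfForm.

Lemma ext_dot_ebas (R : realFieldType) n (I L : {set 'I_n}) :
  ext_dot (ebas R I) (ebas R L) = (L == I)%:R.
Proof.
rewrite /ext_dot; under eq_bigr => M _ do rewrite !ffunE.
by rewrite sum_delta_mul eq_sym.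
Qed.

Lemma dcompE (R : realFieldType) n (w1 w2 : dvec R n) P Q :
  dcomp w1 w2 (P, Q) = \sum_I w1 (I, Q) * w2 (P, I).
Proof.
rewrite ffunE; apply: eq_bigr => I _.
under eq_bigr => J _ do under eq_bigr => K _ do under eq_bigr => L _ do
  rewrite ext_dot_ebas ffunE /= !ffunE.
rewrite (bigD1 Q) //= [X in _ + X]big1 ?addr0 => [|J JQ]; last first.
  by apply: big1 => K _; apply: big1 => L _; rewrite [Q == J]eq_sym (negbTE JQ) !mulr0.
rewrite (bigD1 P) //= [X in _ + X]big1 ?addr0 => [|K KP]; last first.
  by apply: big1 => L _; rewrite [P == K]eq_sym (negbTE KP) !(mul0r, mulr0).
rewrite (bigD1 I) //= [X in _ + X]big1 ?addr0 => [|L LI]; last first.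
  by rewrite (negbTE LI) !(mul0r, mulr0).
by rewrite !eqxx !mulr1.
Qed.

Theorem proposition1p8 (R : realFieldType) (n : nat)
  (h : 'rV[R]_n -> 'rV[R]_n -> R)
  (h_linl : forall (a : R) (u v w : 'rV[R]_n), h (a *: u + v) w = a * h u w + h v w)
  (h_linr : forall (a : R) (u v w : 'rV[R]_n), h u (a *: v + w) = a * h u v + h u w)
  (omega : dvec R n) :
  hhatR h omega = dcomp (dexp (form_dvec h)) omega /\
  hhatL h omega = dcomp omega (dexp (form_dvec (form_tr h))).
Proof.
split; apply/ffunP => -[P Q]; rewrite dcompE.
- rewrite hhatRE; apply: eq_bigr => J _.
  by rewrite dexp_form mulrC.
- rewrite hhatLE; apply: eq_bigr => I _.
  by rewrite dexp_form -minor_tr.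
Qed.
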